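(* Let $p,q$ be positive integers with $\gcd(p,q)=1$, $p$ odd and $p/(2q)-1\in(-1,1)$. Then \[ \mathcal{O}(p/2q)=\Big\{\pm A\Big(\frac{(2\ell+1)^2}{4q^2}\Big):\ \ell\in\{0,1,\dots,q-1\}\Big\} \] and \[ \mathcal{E}(p/2q)=\{\pm A(\ell^2/q^2):\ \ell\in\{0,1,\dots,q-1\}\}. \]
   Context: Nodes: $x_{k,n}:=2k/n-1$, $k=0,\dots,n$; $D_n(x)=\sum_{k=0}^n(-1)^k\frac{1}{x-x_{k,n}}$. $A(y)=\sum_{k=0}^\infty(-1)^k\frac{4k+2}{(2k+1)^2-y}$ for $y\in[0,1)$. A sequence $n_j$ is a strictly increasing map $\mathbb{N}\to\mathbb{N}$, odd (even) if all $n_j$ are odd (even); $x$ is regular for $n_j$ if there is $j_0$ with $x\notin\{x_{0,n_j},\dots,x_{n_j,n_j}\}$ for $j\ge j_0$. For a rational $r$ with $x=r-1\in(-1,1)$, $\mathcal{O}(r)$ is the set of $L\in\overline{\mathbb{R}}=\mathbb{R}\cup\{\pm\infty\}$ such that $\lim_{j\to\infty}D_{n_j}(x)/n_j=L$ for some odd sequence $n_j$ for which $x$ is regular; $\mathcal{E}(r)$ is defined likewise with even sequences. Here $p/2q$ means $p/(2q)$. *)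

From Stdlib Require Import Reals Arith.
From Coquelicot Require Import Coquelicot.
Open Scope R_scope.

Definition node (k n : nat) : R := 2 * INR k / INR n - 1.

(* D_n(x) = sum_{k=0}^n (-1)^k / (x - x_{k,n})  (sum_f_R0 f n has n+1 terms) *)
Definition D (n : nat) (x : R) : R :=
  sum_f_R0 (fun k => (-1) ^ k / (x - node k n)) n.

(* A(y) = sum_{k>=0} (-1)^k (4k+2)/((2k+1)^2 - y), the (conditionally
   convergent) series, as the limit of its partial sums. *)
Definition A (y : R) : R :=
  Series (fun k => (-1) ^ k * (4 * INR k + 2) / ((2 * INR k + 1) ^ 2 - y)).

Definition strictly_increasing (nj : nat -> nat) : Prop :=
  forall j, (nj j < nj (S j))%nat.

Definition odd_seq (nj : nat -> nat) : Prop := forall j, Nat.odd (nj j) = true.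
Definition even_seq (nj : nat -> nat) : Prop := forall j, Nat.even (nj j) = true.

Definition regular (x : R) (nj : nat -> nat) : Prop :=
  exists j0, forall j, (j0 <= j)%nat -> forall k, (k <= nj j)%nat -> x <> node k (nj j).

Definition O_set (r : R) (L : Rbar) : Prop :=
  exists nj : nat -> nat, strictly_increasing nj /\ odd_seq nj /\ regular (r - 1) nj /\
    is_lim_seq (fun j => D (nj j) (r - 1) / INR (nj j)) L.

Definition E_set (r : R) (L : Rbar) : Prop :=
  exists nj : nat -> nat, strictly_increasing nj /\ even_seq nj /\ regular (r - 1) nj /\
    is_lim_seq (fun j => D (nj j) (r - 1) / INR (nj j)) L.

(** Write x = p/(2q) - 1 and n p = 4qc + r with 0 < r < 4q, and put w = r/(2q) - 1,
    which lies in (-1,1).  Since x - x_{k,n} = (2(c-k) + 1 + w)/n, D_n(x)/n is (-1)^c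
    times the sum of the partial sums up to indices c and n-c-1 of the alternating series
    sum_i (-1)^i/(2i+1+w) and sum_i (-1)^i/(2i+1-w), whose sums add up to A(w^2).  Both
    indices are at least n/(4q) - 1, so the alternating series remainder bound gives
    D_n(x)/n = (-1)^c A(w^2) + O(q/n).  Hence the limit along n_j is governed by
    n_j p mod 8q, which (p being odd and prime to 8q) can be any residue of the parity
    of n_j; x is a node exactly when this residue is 0 mod 4q.  Odd residues give
    w^2 = (2l+1)^2/(4q^2), nonzero even ones w^2 = l^2/q^2. *)

From Stdlib Require Import Reals Arith Lia Lra Classical.
From Coquelicot Require Import Coquelicot.
Open Scope R_scope.

Lemma m1_pow_sub (c k : nat) : (k <= c)%nat -> (-1) ^ (c - k) = (-1) ^ c * (-1) ^ k.
Proof.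
  intros Hk.
  replace c with (c - k + k)%nat at 2 by lia.
  rewrite pow_add, Rmult_assoc, <- pow_add.
  replace (k + k)%nat with (2 * k)%nat by lia.
  rewrite pow_1_even. ring.
Qed.

Lemma m1_pow_mod2 (k : nat) : (-1) ^ (k mod 2) = (-1) ^ k.
Proof.
  rewrite (Nat.div_mod_eq k 2) at 2.
  rewrite pow_add, pow_1_even. ring.
Qed.

Lemma Rabs_m1_pow_mult (k : nat) (x : R) : Rabs ((-1) ^ k * x) = Rabs x.
Proof. rewrite Rabs_mult, pow_1_abs. ring. Qed.

Lemma mod_8q_mod_4q (a q : nat) : ((a mod (8 * q)) mod (4 * q) = a mod (4 * q))%nat.
Proof.
  replace (8 * q)%nat with (4 * q * 2)%nat by lia.
  rewrite (Nat.Div0.mod_mul_r a (4 * q) 2), (Nat.mul_comm (4 * q) ((a / (4 * q)) mod 2)).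
  rewrite Nat.Div0.mod_add, Nat.Div0.mod_mod. reflexivity.
Qed.

Lemma odd_mod_even (a b : nat) : Nat.even b = true -> Nat.odd (a mod b) = Nat.odd a.
Proof.
  intros Hb. apply Nat.even_spec in Hb.
  rewrite (Nat.div_mod_eq a b) at 2.
  rewrite Nat.add_comm, Nat.odd_add_mul_even by exact Hb. reflexivity.
Qed.

Lemma odd_mul_odd_r (n p : nat) : Nat.odd p = true -> Nat.odd (n * p) = Nat.odd n.
Proof. intros Hp. rewrite Nat.odd_mul, Hp. apply Bool.andb_true_r. Qed.

Lemma gcd_mul_r_1 (a b c : nat) :
  Nat.gcd a b = 1%nat -> Nat.gcd a c = 1%nat -> Nat.gcd a (b * c) = 1%nat.
Proof.
  intros Hb Hc. set (g := Nat.gcd a (b * c)).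
  assert (Hga : Nat.divide g a) by apply Nat.gcd_divide_l.
  assert (Hgb : Nat.gcd g b = 1%nat).
  { apply Nat.divide_1_r. rewrite <- Hb. apply Nat.gcd_greatest.
    - apply (Nat.divide_trans _ g); [apply Nat.gcd_divide_l | exact Hga].
    - apply Nat.gcd_divide_r. }
  apply Nat.divide_1_r. rewrite <- Hc. apply Nat.gcd_greatest; [exact Hga|].
  apply (Nat.gauss g b c); [apply Nat.gcd_divide_r | exact Hgb].
Qed.

Lemma gcd_odd_2 (p : nat) : Nat.odd p = true -> Nat.gcd p 2 = 1%nat.
Proof.
  intros Hp. apply Nat.odd_spec in Hp as [k ->].
  rewrite Nat.gcd_comm, Nat.add_comm, Nat.mul_comm, Nat.gcd_add_mult_diag_r. reflexivity.
Qed.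

Lemma gcd_odd_8q (p q : nat) :
  Nat.gcd p q = 1%nat -> Nat.odd p = true -> Nat.gcd p (8 * q) = 1%nat.
Proof.
  intros Hg Hp. replace (8 * q)%nat with (2 * (2 * (2 * q)))%nat by lia.
  repeat (apply gcd_mul_r_1; [apply gcd_odd_2, Hp|]). exact Hg.
Qed.

Lemma residue_sequence (p M m : nat) : (0 < p)%nat -> (0 < M)%nat -> Nat.gcd p M = 1%nat ->
  exists nj : nat -> nat, strictly_increasing nj /\
    forall j, (j < nj j)%nat /\ ((nj j * p) mod M = m mod M)%nat.
Proof.
  intros Hp HM Hg.
  destruct (Nat.gcd_bezout_pos p M Hp) as [u [v Huv]]. rewrite Hg in Huv.
  exists (fun j => u * m + M * S j)%nat. split.
  - intro j. nia.
  - intro j. split; [nia|].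
    assert (E : ((u * m + M * S j) * p = m + (m * v + S j * p) * M)%nat).
    { transitivity (m * (u * p) + M * S j * p)%nat; [ring | rewrite Huv; ring]. }
    rewrite E, Nat.Div0.mod_add. reflexivity.
Qed.

Lemma pigeonhole_frequently (f : nat -> nat) (K : nat) : (forall j, (f j < K)%nat) ->
  exists r, (r < K)%nat /\ forall N, exists j, (N <= j)%nat /\ f j = r.
Proof.
  revert f. induction K as [|K IH]; intros f Hf.
  - specialize (Hf 0%nat). lia.
  - destruct (classic (forall N, exists j, (N <= j)%nat /\ f j = K)) as [Hinf | Hfin].
    + exists K. split; [lia | exact Hinf].
    + apply not_all_ex_not in Hfin as [N HN].
      assert (Hlt : forall j, (f (N + j)%nat < K)%nat).
      { intro j. specialize (Hf (N + j)%nat).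
        assert (f (N + j)%nat <> K)
          by (intro E; apply HN; exists (N + j)%nat; split; [lia | exact E]).
        lia. }
      destruct (IH _ Hlt) as [r [Hr Hfreq]].
      exists r. split; [lia|]. intro N'.
      destruct (Hfreq N') as [j [Hj E]]. exists (N + j)%nat. split; [lia | exact E].
Qed.

Lemma strictly_increasing_ge (nj : nat -> nat) :
  strictly_increasing nj -> forall j, (j <= nj j)%nat.
Proof. intros Hinc j. induction j as [|j IH]; [lia|]. specialize (Hinc j). lia. Qed.

Lemma is_lim_seq_frequently_close (u : nat -> R) (L : Rbar) (v : R) :
  is_lim_seq u L ->
  (forall eps, 0 < eps -> forall N, exists j, (N <= j)%nat /\ Rabs (u j - v) < eps) ->
  L = Finite v.
Proof.
  intros HL Hfreq. apply is_lim_seq_spec in HL.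
  destruct L as [l | |]; simpl in HL.
  - destruct (Req_dec l v) as [-> | Hne]; [reflexivity | exfalso].
    assert (Heps : 0 < Rabs (v - l) / 2).
    { assert (0 < Rabs (v - l)) by (apply Rabs_pos_lt; lra). lra. }
    destruct (HL (mkposreal _ Heps)) as [N HN].
    destruct (Hfreq _ Heps N) as [j [Hj Hvj]].
    specialize (HN j Hj). simpl in HN.
    pose proof (Rabs_triang (v - u j) (u j - l)) as Htri.
    replace (v - u j + (u j - l)) with (v - l) in Htri by ring.
    rewrite Rabs_minus_sym in Hvj. lra.
  - destruct (HL (v + 1)) as [N HN]. destruct (Hfreq 1 Rlt_0_1 N) as [j [Hj Hvj]].
    specialize (HN j Hj). apply Rabs_def2 in Hvj. lra.
  - destruct (HL (v - 1)) as [N HN]. destruct (Hfreq 1 Rlt_0_1 N) as [j [Hj Hvj]].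
    specialize (HN j Hj). apply Rabs_def2 in Hvj. lra.
Qed.

Lemma eventually_div_INR_lt (C eps : R) : 0 < eps ->
  exists N, forall n, (N <= n)%nat -> C / INR n < eps.
Proof.
  intros Heps.
  assert (Hlim : is_lim_seq (fun n => C / INR n) 0).
  { apply (is_lim_seq_div _ _ C p_infty);
      [apply is_lim_seq_const | apply is_lim_seq_INR | discriminate | apply is_Rbar_div_p_infty]. }
  apply is_lim_seq_spec in Hlim. destruct (Hlim (mkposreal _ Heps)) as [N HN].
  exists N. intros n Hn. specialize (HN n Hn). simpl in HN.
  rewrite Rminus_0_r in HN. apply Rabs_def2 in HN. lra.
Qed.

(** * Alternating series *)

Lemma alternating_series_remainder (b : nat -> R) (l : R) :
  Un_decreasing b -> Un_cv b 0 -> Un_cv (sum_f_R0 (tg_alt b)) l ->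
  forall N, Rabs (sum_f_R0 (tg_alt b) N - l) <= b (S N).
Proof.
  intros Hdec Hcv Hl N.
  destruct (Nat.Even_or_Odd N) as [[K ->] | [K ->]].
  - destruct (alternated_series_ineq b l K Hdec Hcv Hl) as [Hlo Hhi].
    rewrite tech5 in Hlo. unfold tg_alt at 2 in Hlo. rewrite pow_1_odd in Hlo.
    apply Rabs_le. lra.
  - destruct (alternated_series_ineq b l K Hdec Hcv Hl) as [Hlo _].
    destruct (alternated_series_ineq b l (S K) Hdec Hcv Hl) as [_ Hhi].
    replace (2 * S K)%nat with (S (2 * K + 1)) in Hhi by lia.
    replace (S (2 * K)) with (2 * K + 1)%nat in Hlo by lia.
    rewrite tech5 in Hhi. unfold tg_alt at 2 in Hhi.
    replace (S (2 * K + 1)) with (2 * S K)%nat in Hhi |- * by lia.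
    rewrite pow_1_even in Hhi.
    apply Rabs_le. lra.
Qed.

Definition odd_recip (w : R) (k : nat) : R := / (2 * INR k + 1 + w).

Lemma odd_recip_decreasing (w : R) : -1 < w -> Un_decreasing (odd_recip w).
Proof.
  intros Hw k. unfold odd_recip. rewrite S_INR. pose proof (pos_INR k).
  apply Rinv_le_contravar; lra.
Qed.

Lemma odd_recip_cv0 (w : R) : -1 < w -> Un_cv (odd_recip w) 0.
Proof.
  intros Hw. apply is_lim_seq_Reals.
  change (Finite 0) with (Rbar_inv p_infty).
  apply is_lim_seq_inv; [|discriminate].
  apply is_lim_seq_le_p_loc with INR; [|exact is_lim_seq_INR].
  exists 0%nat. intros k _. pose proof (pos_INR k). lra.
Qed.

Lemma odd_recip_succ_le (w : R) (M N : nat) :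
  -1 < w -> (M <= N)%nat -> odd_recip w (S N) <= / (2 * INR (S M)).
Proof.
  intros Hw HMN. unfold odd_recip.
  apply le_INR in HMN. rewrite !S_INR. pose proof (pos_INR M).
  apply Rinv_le_contravar; lra.
Qed.

Lemma A_approx (w : R) (N1 N2 : nat) : -1 < w < 1 ->
  Rabs (sum_f_R0 (tg_alt (odd_recip w)) N1 + sum_f_R0 (tg_alt (odd_recip (- w))) N2
        - A (w ^ 2))
  <= / INR (S (Nat.min N1 N2)).
Proof.
  intros Hw.
  assert (Hw1 : -1 < w) by lra.
  assert (Hw2 : -1 < - w) by lra.
  destruct (alternated_series _ (odd_recip_decreasing _ Hw1) (odd_recip_cv0 _ Hw1)) as [l1 Hl1].
  destruct (alternated_series _ (odd_recip_decreasing _ Hw2) (odd_recip_cv0 _ Hw2)) as [l2 Hl2].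
  assert (HA : A (w ^ 2) = l1 + l2).
  { unfold A. apply is_series_unique.
    apply (is_series_ext (fun k => plus (tg_alt (odd_recip w) k) (tg_alt (odd_recip (- w)) k))).
    - intro k. unfold tg_alt, odd_recip, plus. simpl. pose proof (pos_INR k).
      field. repeat split; nra.
    - apply (@is_series_plus R_AbsRing R_NormedModule); apply is_series_Reals; assumption. }
  set (M := Nat.min N1 N2).
  pose proof (alternating_series_remainder _ _ (odd_recip_decreasing _ Hw1)
                (odd_recip_cv0 _ Hw1) Hl1 N1) as E1.
  pose proof (alternating_series_remainder _ _ (odd_recip_decreasing _ Hw2)
                (odd_recip_cv0 _ Hw2) Hl2 N2) as E2.
  pose proof (odd_recip_succ_le w M N1 Hw1 (Nat.le_min_l N1 N2)) as B1.
  pose proof (odd_recip_succ_le (- w) M N2 Hw2 (Nat.le_min_r N1 N2)) as B2.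
  assert (Hhalf : / (2 * INR (S M)) + / (2 * INR (S M)) = / INR (S M)).
  { pose proof (lt_0_INR (S M) (Nat.lt_0_succ M)). field. lra. }
  set (s1 := sum_f_R0 (tg_alt (odd_recip w)) N1) in *.
  set (s2 := sum_f_R0 (tg_alt (odd_recip (- w))) N2) in *.
  rewrite HA.
  pose proof (Rabs_triang (s1 - l1) (s2 - l2)).
  replace (s1 + s2 - (l1 + l2)) with (s1 - l1 + (s2 - l2)) by ring.
  lra.
Qed.

Lemma odd_shift_neq0 (w : R) (c k : nat) : -1 < w < 1 -> 2 * INR c + 1 + w - 2 * INR k <> 0.
Proof.
  intros Hw E.
  destruct (le_lt_dec k c) as [Hk | Hk]; apply le_INR in Hk; [|rewrite S_INR in Hk]; lra.
Qed.

Lemma alternating_odd_split (w : R) (c n : nat) : -1 < w < 1 -> (c < n)%nat ->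
  sum_f_R0 (fun k => (-1) ^ k / (2 * INR c + 1 + w - 2 * INR k)) n =
  (-1) ^ c * (sum_f_R0 (tg_alt (odd_recip w)) c
              + sum_f_R0 (tg_alt (odd_recip (- w))) (n - S c)).
Proof.
  intros Hw Hcn.
  set (f := fun k => (-1) ^ k / (2 * INR c + 1 + w - 2 * INR k)).
  assert (Hleft : sum_f_R0 f c = (-1) ^ c * sum_f_R0 (tg_alt (odd_recip w)) c).
  { rewrite <- sum_f_R0_skip, scal_sum. apply sum_eq. intros i Hi.
    unfold f, tg_alt, odd_recip. rewrite m1_pow_sub, minus_INR by lia.
    pose proof (pos_INR i). field. lra. }
  assert (Hright : sum_f_R0 (fun i => f (S c + i)%nat) (n - S c)
                   = (-1) ^ c * sum_f_R0 (tg_alt (odd_recip (- w))) (n - S c)).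
  { rewrite scal_sum. apply sum_eq. intros i _.
    unfold f, tg_alt, odd_recip. rewrite plus_INR, S_INR, pow_add. simpl pow.
    pose proof (pos_INR i). field. lra. }
  rewrite (tech2 f c n Hcn), Hleft, Hright. ring.
Qed.

(** * D_n at the point p/(2q) - 1 *)

Definition point (q r : nat) : R := INR r / (2 * INR q) - 1.

Lemma point_bounds (q r : nat) : (0 < r < 4 * q)%nat -> -1 < point q r < 1.
Proof.
  intros Hr. unfold point.
  assert (Hq : 0 < INR q) by (apply lt_0_INR; lia).
  assert (Hr0 : 0 < INR r) by (apply lt_0_INR; lia).
  assert (Hr4 : INR r < INR (4 * q)) by (apply lt_INR; lia).
  rewrite mult_INR in Hr4. simpl in Hr4.
  set (t := INR r / (2 * INR q)).
  assert (Ht : INR r = 2 * INR q * t) by (unfold t; field; lra).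
  split; nra.
Qed.

Lemma lt_4q_of_point_lt_1 (q p : nat) : (0 < q)%nat -> point q p < 1 -> (p < 4 * q)%nat.
Proof.
  intros Hq Hp. unfold point in Hp.
  assert (Hq' : 0 < INR q) by (apply lt_0_INR; lia).
  apply INR_lt. rewrite mult_INR. simpl.
  assert (E : INR p = INR p / (2 * INR q) * (2 * INR q)) by (field; lra).
  nra.
Qed.

Lemma point_eq_node (q p n k : nat) : (0 < q)%nat -> (0 < n)%nat ->
  point q p = node k n <-> (n * p = 4 * q * k)%nat.
Proof.
  intros Hq Hn.
  assert (Hq' : 0 < INR q) by (apply lt_0_INR; lia).
  assert (Hn' : 0 < INR n) by (apply lt_0_INR; lia).
  assert (E : point q p - node k n = (INR (n * p) - INR (4 * q * k)) / (2 * INR q * INR n)).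
  { unfold point, node. rewrite !mult_INR. simpl. field. lra. }
  split; intro H.
  - apply INR_eq. assert (E0 : (INR (n * p) - INR (4 * q * k)) / (2 * INR q * INR n) = 0) by lra.
    apply Rmult_integral in E0 as [E0 | E0]; [lra|].
    exfalso. revert E0. apply Rinv_neq_0_compat. nra.
  - rewrite H, Rminus_diag in E. unfold Rdiv in E. rewrite Rmult_0_l in E. lra.
Qed.

Lemma D_point_div (n p q c r : nat) :
  (0 < n)%nat -> (0 < r < 4 * q)%nat -> (n * p = 4 * q * c + r)%nat ->
  D n (point q p) / INR n
  = sum_f_R0 (fun k => (-1) ^ k / (2 * INR c + 1 + point q r - 2 * INR k)) n.
Proof.
  intros Hn Hr Hnp.
  assert (Hq : 0 < INR q) by (apply lt_0_INR; lia).
  assert (Hn' : 0 < INR n) by (apply lt_0_INR; lia).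
  assert (Hp : INR p = (4 * INR q * INR c + INR r) / INR n).
  { assert (Hnp' : INR n * INR p = 4 * INR q * INR c + INR r)
      by (rewrite <- mult_INR, Hnp, plus_INR, !mult_INR; simpl; ring).
    rewrite <- Hnp'. field. lra. }
  unfold Rdiv at 1. unfold D. rewrite Rmult_comm, scal_sum. apply sum_eq. intros k _.
  pose proof (odd_shift_neq0 (point q r) c k (point_bounds q r Hr)).
  assert (E : point q p - node k n = (2 * INR c + 1 + point q r - 2 * INR k) / INR n).
  { unfold point, node. rewrite Hp. field. lra. }
  rewrite E. field. lra.
Qed.

Lemma D_approx (n p q c r : nat) :
  (0 < n)%nat -> (p < 4 * q)%nat -> (0 < r < 4 * q)%nat -> (n * p = 4 * q * c + r)%nat ->
  Rabs (D n (point q p) / INR n - (-1) ^ c * A (point q r ^ 2)) <= 4 * INR q / INR n.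
Proof.
  intros Hn Hp Hr Hnp.
  assert (Hcn : (c < n)%nat) by nia.
  assert (Hw := point_bounds q r Hr).
  rewrite (D_point_div n p q c r Hn Hr Hnp), (alternating_odd_split _ c n Hw Hcn).
  rewrite <- Rmult_minus_distr_l, Rabs_m1_pow_mult.
  eapply Rle_trans; [apply A_approx; exact Hw|].
  set (M := Nat.min c (n - S c)).
  (* Both partial sums are long: 4q(c+1) > np >= n and 4q(n-c) = 4qn - np + r > n. *)
  assert (HM : (n <= 4 * q * S M)%nat).
  { assert (Hp0 : (0 < p)%nat) by (destruct p; lia).
    assert (Hnp4 : (n * p + n <= 4 * q * n)%nat) by nia.
    unfold M. destruct (Nat.min_spec c (n - S c)) as [[_ ->] | [_ ->]]; [nia|].
    replace (S (n - S c)) with (n - c)%nat by lia. rewrite Nat.mul_sub_distr_l. lia. }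
  apply le_INR in HM. rewrite !mult_INR in HM. simpl (INR 4) in HM.
  assert (0 < INR n) by (apply lt_0_INR; lia).
  assert (0 < INR (S M)) by (apply lt_0_INR; lia).
  apply (Rmult_le_reg_r (INR n * INR (S M))); [nra|].
  replace (/ INR (S M) * (INR n * INR (S M))) with (INR n) by (field; lra).
  replace (4 * INR q / INR n * (INR n * INR (S M))) with (4 * INR q * INR (S M)) by (field; lra).
  lra.
Qed.

(* The limit of D_n(x)/n along the n with n p = m (mod 8q). *)
Definition profile (q m : nat) : R :=
  (-1) ^ (m / (4 * q)) * A (point q (m mod (4 * q)) ^ 2).

Lemma D_approx_profile (n p q : nat) :
  (0 < n)%nat -> (p < 4 * q)%nat -> ((n * p) mod (4 * q) <> 0)%nat ->
  Rabs (D n (point q p) / INR n - profile q (n * p)) <= 4 * INR q / INR n.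
Proof.
  intros Hn Hp Hr. unfold profile. apply D_approx; [exact Hn | exact Hp | | apply Nat.div_mod_eq].
  split; [lia | apply Nat.mod_upper_bound; lia].
Qed.

Lemma profile_mod_8q (q m : nat) : (0 < q)%nat -> profile q (m mod (8 * q)) = profile q m.
Proof.
  intros Hq. unfold profile.
  replace (8 * q)%nat with (4 * q * 2)%nat by lia.
  rewrite (Nat.Div0.mod_mul_r m (4 * q) 2), (Nat.mul_comm (4 * q) ((m / (4 * q)) mod 2)).
  rewrite Nat.div_add, Nat.Div0.mod_add, Nat.Div0.mod_mod, Nat.div_small by
    (try apply Nat.mod_upper_bound; lia).
  rewrite Nat.add_0_l, m1_pow_mod2. reflexivity.
Qed.

Lemma profile_small (q r : nat) : (r < 4 * q)%nat -> profile q r = A (point q r ^ 2).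
Proof.
  intros Hr. unfold profile. rewrite Nat.div_small, Nat.mod_small by exact Hr.
  rewrite pow_O. ring.
Qed.

Lemma profile_add_4q (q m : nat) : (0 < q)%nat -> profile q (m + 4 * q) = - profile q m.
Proof.
  intros Hq. unfold profile.
  replace (m + 4 * q)%nat with (m + 1 * (4 * q))%nat by lia.
  rewrite Nat.div_add, Nat.Div0.mod_add, pow_add by lia. ring.
Qed.

Lemma profile_lt_8q (q m : nat) : (m < 8 * q)%nat ->
  profile q m = A (point q (m mod (4 * q)) ^ 2) \/
  profile q m = - A (point q (m mod (4 * q)) ^ 2).
Proof.
  intros Hm. unfold profile.
  assert (Hb : (m / (4 * q) < 2)%nat) by (apply Nat.Div0.div_lt_upper_bound; lia).
  destruct (m / (4 * q))%nat as [|[|b]]; [left | right | lia]; ring.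
Qed.

(** * Limit points along parity classes *)

(* O_set r and E_set r unfold to limit_points Nat.odd (r - 1) and limit_points Nat.even (r - 1). *)
Definition limit_points (P : nat -> bool) (x : R) (L : Rbar) : Prop :=
  exists nj : nat -> nat, strictly_increasing nj /\ (forall j, P (nj j) = true) /\
    regular x nj /\ is_lim_seq (fun j => D (nj j) x / INR (nj j)) L.

Definition parity_invariant (P : nat -> bool) : Prop :=
  forall a b, Nat.odd a = Nat.odd b -> P a = P b.

Lemma limit_points_profile (P : nat -> bool) (p q : nat) (L : Rbar) :
  parity_invariant P -> (p < 4 * q)%nat -> Nat.odd p = true ->
  limit_points P (point q p) L ->
  exists m, (m < 8 * q)%nat /\ (m mod (4 * q) <> 0)%nat /\ P m = true /\
            L = Finite (profile q m).
Proof.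
  intros HP Hp Hodd [nj [Hinc [HPn [[j0 Hreg] Hlim]]]].
  assert (Hq : (0 < q)%nat) by lia.
  destruct (pigeonhole_frequently (fun j => (nj j * p) mod (8 * q))%nat (8 * q))
    as [m [Hm Hfreq]].
  { intro j. apply Nat.mod_upper_bound. lia. }
  assert (Hnode : forall j, (j0 <= j)%nat -> (1 <= j)%nat -> ((nj j * p) mod (4 * q) <> 0)%nat).
  { intros j Hj Hj1 Hmod. apply Nat.Div0.mod_divides in Hmod as [k Hk].
    pose proof (strictly_increasing_ge nj Hinc j).
    apply (Hreg j Hj k); [nia | apply point_eq_node; lia]. }
  destruct (Hfreq (Nat.max j0 1)) as [j1 [Hj1 Hm1]]. cbv beta in Hm1.
  exists m. split; [exact Hm|]. split; [|split].
  - rewrite <- Hm1, mod_8q_mod_4q. apply Hnode; lia.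
  - rewrite <- (HPn j1). apply HP.
    rewrite <- Hm1, odd_mod_even, odd_mul_odd_r by (rewrite ?Nat.even_mul; auto).
    reflexivity.
  - apply (is_lim_seq_frequently_close _ _ _ Hlim). intros eps Heps N.
    destruct (eventually_div_INR_lt (4 * INR q) eps Heps) as [N1 HN1].
    destruct (Hfreq (Nat.max N (Nat.max j0 (Nat.max 1 N1)))) as [j [Hj Hmj]]. cbv beta in Hmj.
    pose proof (strictly_increasing_ge nj Hinc j).
    exists j. split; [lia|].
    rewrite <- Hmj, profile_mod_8q by exact Hq.
    eapply Rle_lt_trans; [apply D_approx_profile; [lia | exact Hp | apply Hnode; lia] |].
    apply HN1. lia.
Qed.

Lemma profile_limit_points (P : nat -> bool) (p q m : nat) :
  parity_invariant P -> (0 < p)%nat -> (p < 4 * q)%nat -> Nat.gcd p q = 1%nat ->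
  Nat.odd p = true -> (m mod (4 * q) <> 0)%nat -> P m = true ->
  limit_points P (point q p) (profile q m).
Proof.
  intros HP Hp0 Hp Hg Hodd Hm HPm.
  assert (Hq : (0 < q)%nat) by lia.
  destruct (residue_sequence p (8 * q) m Hp0 ltac:(lia) (gcd_odd_8q p q Hg Hodd))
    as [nj [Hinc Hnj]].
  assert (Hres4 : forall j, ((nj j * p) mod (4 * q) = m mod (4 * q))%nat).
  { intro j. rewrite <- mod_8q_mod_4q, (proj2 (Hnj j)), mod_8q_mod_4q. reflexivity. }
  exists nj. split; [exact Hinc|]. split; [|split].
  - intro j. rewrite <- HPm. apply HP.
    rewrite <- (odd_mul_odd_r (nj j) p Hodd), <- (odd_mod_even _ (8 * q)), (proj2 (Hnj j)),
      odd_mod_even by (rewrite Nat.even_mul; reflexivity).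
    reflexivity.
  - exists 0%nat. intros j _ k _ Hk. apply Hm.
    rewrite <- (Hres4 j). apply Nat.Div0.mod_divides. exists k.
    apply point_eq_node; [lia | pose proof (proj1 (Hnj j)); lia | exact Hk].
  - apply is_lim_seq_spec. intros [eps Heps].
    destruct (eventually_div_INR_lt (4 * INR q) eps Heps) as [N HN].
    exists N. intros j Hj. simpl. destruct (Hnj j) as [Hjn Hres].
    rewrite <- (profile_mod_8q q m), <- Hres, profile_mod_8q by exact Hq.
    eapply Rle_lt_trans; [apply D_approx_profile; [lia | exact Hp | rewrite Hres4; exact Hm] |].
    apply HN. lia.
Qed.

Lemma limit_points_iff_pm_A (P : nat -> bool) (g : nat -> R) (p q : nat) :
  parity_invariant P -> (0 < p)%nat -> (p < 4 * q)%nat -> Nat.gcd p q = 1%nat ->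
  Nat.odd p = true ->
  (forall r, (0 < r < 4 * q)%nat -> P r = true -> exists l, (l < q)%nat /\ point q r ^ 2 = g l) ->
  (forall l, (l < q)%nat -> exists r, (0 < r < 4 * q)%nat /\ P r = true /\ point q r ^ 2 = g l) ->
  forall L, limit_points P (point q p) L <->
    exists l, (l < q)%nat /\ (L = Finite (A (g l)) \/ L = Finite (- A (g l))).
Proof.
  intros HP Hp0 Hp Hg Hodd Hsq Hwit L.
  assert (Hq : (0 < q)%nat) by lia.
  split.
  - intros HL.
    destruct (limit_points_profile P p q L HP Hp Hodd HL) as [m [Hm8 [Hm4 [HPm ->]]]].
    destruct (Hsq (m mod (4 * q))%nat) as [l [Hl Hgl]].
    + split; [lia | apply Nat.mod_upper_bound; lia].
    + rewrite <- HPm. apply HP. apply odd_mod_even. rewrite Nat.even_mul. reflexivity.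
    + exists l. split; [exact Hl|]. rewrite <- Hgl.
      destruct (profile_lt_8q q m Hm8) as [-> | ->]; [left | right]; reflexivity.
  - intros [l [Hl HL]].
    destruct (Hwit l Hl) as [r [Hr [HPr Hgr]]].
    rewrite <- Hgr, <- (profile_small q r) in HL by lia.
    destruct HL as [-> | ->].
    + apply profile_limit_points; auto. rewrite Nat.mod_small; lia.
    + rewrite <- profile_add_4q by exact Hq.
      apply profile_limit_points; auto.
      * replace (r + 4 * q)%nat with (r + 1 * (4 * q))%nat by lia.
        rewrite Nat.Div0.mod_add, Nat.mod_small; lia.
      * rewrite <- HPr. apply HP. apply Nat.odd_add_mul_even. exists 2%nat. reflexivity.
Qed.

(** * Squares of the points r/(2q) - 1 *)

Lemma point_sq_centered (q r d : nat) : (0 < q)%nat -> (r = 2 * q + d \/ r + d = 2 * q)%nat ->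
  point q r ^ 2 = INR d ^ 2 / (4 * INR q ^ 2).
Proof.
  intros Hq Hrd. unfold point.
  assert (Hq' : 0 < INR q) by (apply lt_0_INR; lia).
  destruct Hrd as [-> | E].
  - rewrite plus_INR, mult_INR. simpl. field. lra.
  - apply (f_equal INR) in E. rewrite !plus_INR, mult_INR in E. simpl in E.
    replace (INR r) with (2 * INR q - INR d) by lra. field. lra.
Qed.

Lemma odd_offset_sq (q r : nat) : (0 < q)%nat -> (r < 4 * q)%nat -> Nat.odd r = true ->
  exists l, (l < q)%nat /\ point q r ^ 2 = (2 * INR l + 1) ^ 2 / (4 * INR q ^ 2).
Proof.
  intros Hq Hr Hodd. apply Nat.odd_spec in Hodd as [s ->].
  destruct (le_lt_dec q s) as [Hs | Hs].
  - exists (s - q)%nat. split; [lia|].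
    rewrite (point_sq_centered q _ (2 * (s - q) + 1)) by lia.
    rewrite plus_INR, mult_INR. reflexivity.
  - exists (q - 1 - s)%nat. split; [lia|].
    rewrite (point_sq_centered q _ (2 * (q - 1 - s) + 1)) by lia.
    rewrite plus_INR, mult_INR. reflexivity.
Qed.

Lemma odd_offset_witness (q l : nat) : (l < q)%nat ->
  exists r, (0 < r < 4 * q)%nat /\ Nat.odd r = true /\
            point q r ^ 2 = (2 * INR l + 1) ^ 2 / (4 * INR q ^ 2).
Proof.
  intros Hl. exists (2 * q + (2 * l + 1))%nat. split; [lia|]. split.
  - rewrite Nat.add_comm, Nat.odd_add_mul_2. apply Nat.odd_odd.
  - rewrite (point_sq_centered q _ (2 * l + 1)) by lia.
    rewrite plus_INR, mult_INR. reflexivity.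
Qed.

Lemma even_offset_sq (q r : nat) : (0 < q)%nat -> (0 < r < 4 * q)%nat -> Nat.even r = true ->
  exists l, (l < q)%nat /\ point q r ^ 2 = INR l ^ 2 / INR q ^ 2.
Proof.
  intros Hq Hr Hev. apply Nat.even_spec in Hev as [s ->].
  assert (Hq' : 0 < INR q) by (apply lt_0_INR; lia).
  destruct (le_lt_dec q s) as [Hs | Hs].
  - exists (s - q)%nat. split; [lia|].
    rewrite (point_sq_centered q _ (2 * (s - q))) by lia.
    rewrite mult_INR. simpl. field. lra.
  - exists (q - s)%nat. split; [lia|].
    rewrite (point_sq_centered q _ (2 * (q - s))) by lia.
    rewrite mult_INR. simpl. field. lra.
Qed.

Lemma even_offset_witness (q l : nat) : (0 < q)%nat -> (l < q)%nat ->
  exists r, (0 < r < 4 * q)%nat /\ Nat.even r = true /\ point q r ^ 2 = INR l ^ 2 / INR q ^ 2.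
Proof.
  intros Hq Hl. assert (Hq' : 0 < INR q) by (apply lt_0_INR; lia).
  exists (2 * q + 2 * l)%nat. split; [lia|]. split.
  - rewrite <- Nat.mul_add_distr_l. apply Nat.even_spec. eexists. reflexivity.
  - rewrite (point_sq_centered q _ (2 * l)) by lia.
    rewrite mult_INR. simpl. field. lra.
Qed.

Theorem corollary5 (p q : nat) :
  (0 < p)%nat -> (0 < q)%nat -> Nat.gcd p q = 1%nat -> Nat.odd p = true ->
  -1 < INR p / (2 * INR q) - 1 < 1 ->
  (forall L : Rbar,
     O_set (INR p / (2 * INR q)) L <->
     exists l : nat, (l < q)%nat /\
       (L = Finite (A ((2 * INR l + 1) ^ 2 / (4 * INR q ^ 2))) \/
        L = Finite (- A ((2 * INR l + 1) ^ 2 / (4 * INR q ^ 2))))) /\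
  (forall L : Rbar,
     E_set (INR p / (2 * INR q)) L <->
     exists l : nat, (l < q)%nat /\
       (L = Finite (A (INR l ^ 2 / INR q ^ 2)) \/
        L = Finite (- A (INR l ^ 2 / INR q ^ 2)))).
Proof.
  intros Hp Hq Hgcd Hodd Hx.
  assert (Hp4 : (p < 4 * q)%nat) by (apply (lt_4q_of_point_lt_1 q p Hq), Hx).
  split; intro L.
  - exact (limit_points_iff_pm_A Nat.odd (fun l => (2 * INR l + 1) ^ 2 / (4 * INR q ^ 2)) p q
             (fun a b E => E) Hp Hp4 Hgcd Hodd
             (fun r Hr => odd_offset_sq q r Hq (proj2 Hr)) (odd_offset_witness q) L).
  - refine (limit_points_iff_pm_A Nat.even (fun l => INR l ^ 2 / INR q ^ 2) p q
              _ Hp Hp4 Hgcd Hodd (fun r Hr => even_offset_sq q r Hq Hr)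
              (fun l => even_offset_witness q l Hq) L).
    intros a b E. rewrite <- !Nat.negb_odd, E. reflexivity.
Qed.
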